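(* Let $(A,W)$ be a Pratt comonoid, $x_0\supseteq x_1\supseteq\cdots$ an $\omega$-indexed descending chain of elements of $W$, and $y_0\subseteq y_1\subseteq\cdots$ an $\omega$-indexed ascending chain of elements of $W$, such that either $\bigcap_{n\in\omega}x_n=\emptyset$ or $\bigcup_{n\in\omega}y_n=A$. Then $\bigcup_{n\in\omega}(x_n\cap y_n)\in W$.
   Context: A Pratt comonoid is a pair $(A,W)$ where $A$ is a set and $W$ is a set of subsets of $A$ such that (i) $\emptyset\in W$ and $A\in W$; (ii) whenever $C\subseteq A\times A$ is such that for every $a\in A$ both the $a$-th row $\{b\mid (a,b)\in C\}$ and the $a$-th column $\{b\mid (b,a)\in C\}$ belong to $W$ (a crossword over $W$), the diagonal $\{b\mid (b,b)\in C\}$ also belongs to $W$. *)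

From mathcomp Require Import all_boot.
From mathcomp Require Import boolp classical_sets.
Set Implicit Arguments. Unset Strict Implicit. Unset Printing Implicit Defensive.
Local Open Scope classical_set_scope.

Definition crossword (A : Type) (W : set (set A)) (C : set (A * A)) : Prop :=
  forall a : A, W [set b | C (a, b)] /\ W [set b | C (b, a)].

Definition pratt_comonoid (A : Type) (W : set (set A)) : Prop :=
  W set0 /\ W setT /\
  (forall C : set (A * A), crossword W C -> W [set b | C (b, b)]).

(* Take the crossword C := {(a, b) | a ∈ y_n and b ∈ x_n for some n}, whose
   diagonal is the union in question. Since the y_n ascend, the indices n
   with a ∈ y_n form a final segment of ω, so the row of a is x_k for its
   least element k (or empty); since the x_n descend, the indices n with
   b ∈ x_n form an initial segment, so the column of b is y_k for its largest
   element k, or empty, or (when b lies in every x_n) the whole union of the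
   y_n. The last case is excluded by the first alternative of the hypothesis
   and yields A under the second one. *)

From mathcomp Require Import all_boot.
From mathcomp Require Import boolp classical_sets.
Local Open Scope classical_set_scope.

Lemma upclosed_nat (S : set nat) : (forall n, S n -> S n.+1) ->
  S = set0 \/ exists k, S = [set n | (k <= n)%N].
Proof.
move=> S_up; have [[n Sn]|S0] := pselect (exists n, S n); last first.
  by left; apply/seteqP; split => // n Sn; apply: S0; exists n.
have exS : exists n, `[< S n >] by exists n; apply/asboolP.
right; exists (ex_minn exS); case: ex_minnP => k /asboolP Sk k_min.
apply/seteqP; split => m /=; first by move=> Sm; apply/k_min/asboolP.
by move=> /subnK <-; elim: (m - k) => //= i IH; apply: S_up.
Qed.

Lemma downclosed_nat (S : set nat) : (forall n, S n.+1 -> S n) ->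
  S = setT \/ exists k, S = [set n | (n < k)%N].
Proof.
move=> S_down; have [|CS0|[k CS]] := @upclosed_nat (~` S).
- by move=> n nSn Sn1; apply/nSn/S_down.
- by left; rewrite -[S]setCK CS0 setC0.
- right; exists k; apply/seteqP; split => n /=.
    by rewrite ltnNge => Sn; apply/negP => kn; have : (~` S) n by rewrite CS.
  move=> ltnk; apply: contrapT => nSn.
  have : [set n | (k <= n)%N] n by rewrite -CS.
  by rewrite /= leqNgt ltnk.
Qed.

Section MonotoneChains.
Variable A : Type.

Lemma nonincreasing_sub (x : nat -> set A) : (forall n, x n.+1 `<=` x n) ->
  forall m n, (m <= n)%N -> x n `<=` x m.
Proof.
by move=> xD m n /subnK <-; elim: (n - m) => //= k IH a /xD /IH.
Qed.

Lemma nondecreasing_sub (y : nat -> set A) : (forall n, y n `<=` y n.+1) ->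
  forall m n, (m <= n)%N -> y m `<=` y n.
Proof.
by move=> yI m n /subnK <-; elim: (n - m) => //= k IH a /IH /yI.
Qed.

Lemma bigcup_nonincreasing_from (x : nat -> set A) k :
  (forall n, x n.+1 `<=` x n) -> \bigcup_(n in [set n | (k <= n)%N]) x n = x k.
Proof.
move=> xD; apply/seteqP; split => [a [n /= kn]|a xka]; last by exists k => /=.
exact: nonincreasing_sub.
Qed.

Lemma bigcup_nondecreasing_below (y : nat -> set A) k :
  (forall n, y n `<=` y n.+1) -> \bigcup_(n in [set n | (n < k.+1)%N]) y n = y k.
Proof.
move=> yI; apply/seteqP; split => [a [n /= nk]|a yka]; last by exists k => /=.
exact: nondecreasing_sub.
Qed.

Variable W : set (set A).
Hypothesis W0 : W set0.

Lemma W_bigcup_upclosed (x : nat -> set A) (S : set nat) :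
  (forall n, W (x n)) -> (forall n, x n.+1 `<=` x n) ->
  (forall n, S n -> S n.+1) -> W (\bigcup_(n in S) x n).
Proof.
move=> Wx xD /upclosed_nat [->|[k ->]]; first by rewrite bigcup_set0.
by rewrite bigcup_nonincreasing_from.
Qed.

Lemma W_bigcup_downclosed (y : nat -> set A) (S : set nat) :
  (forall n, W (y n)) -> (forall n, y n `<=` y n.+1) ->
  (forall n, S n.+1 -> S n) -> S != setT -> W (\bigcup_(n in S) y n).
Proof.
move=> Wy yI /downclosed_nat [->|[[|k] ->]]; first by rewrite eqxx.
- have -> : [set n | (n < 0)%N] = set0 by apply/seteqP; split.
  by rewrite bigcup_set0.
- by rewrite bigcup_nondecreasing_below.
Qed.

End MonotoneChains.

Theorem lemma7p2 (A : Type) (W : set (set A))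
  (x y : nat -> set A) :
  pratt_comonoid W ->
  (forall n, W (x n)) -> (forall n, (x n.+1 `<=` x n)) ->
  (forall n, W (y n)) -> (forall n, (y n `<=` y n.+1)) ->
  (\bigcap_n x n = set0 \/ \bigcup_n y n = setT) ->
  W (\bigcup_n (x n `&` y n)).
Proof.
move=> [W0 [WT W_diag]] Wx xD Wy yI x_or_y.
pose C : set (A * A) := [set p | exists n, y n p.1 /\ x n p.2].
have -> : \bigcup_n (x n `&` y n) = [set b | C (b, b)].
  by apply/seteqP; split => b /= [n] => [_ [? ?]|[? ?]]; exists n.
apply: W_diag => a; split.
- have -> : [set b | C (a, b)] = \bigcup_(n in [set n | y n a]) x n.
    by apply/seteqP; split => b /= [n] => [[? ?]|? ?]; exists n.
  by apply: W_bigcup_upclosed => // n /yI.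
- have -> : [set b | C (b, a)] = \bigcup_(n in [set n | x n a]) y n.
    by apply/seteqP; split => b /= [n] => [[? ?]|? ?]; exists n.
  have [xa|xa] := eqVneq [set n | x n a] setT; last first.
    by apply: W_bigcup_downclosed => // n /xD.
  rewrite xa; case: x_or_y => [x_cap|->]; last exact: WT.
  have : (\bigcap_n x n) a by move=> n _; rewrite -[x n a]/([set n | x n a] n) xa.
  by rewrite x_cap.
Qed.
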